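(* Let $(\mathcal{A},\mathcal{E})$ be a finite, essentially small exact category and let $X,Y$ be indecomposable objects with $\mu_\mathcal{E}(X)\lll\mu_\mathcal{E}(Y)$ and $\mu_\mathcal{E}(X)\ne\mu_\mathcal{E}(Y)$. Then there exist indecomposable objects $Y'\subsetneq_\mathcal{E}Y''\subset_\mathcal{E}Y$ such that $Y'$ is an $\mathcal{E}$-Gabriel–Roiter predecessor of $Y''$, $\mu_\mathcal{E}(Y')\lll\mu_\mathcal{E}(X)$, $\mu_\mathcal{E}(X)\lll\mu_\mathcal{E}(Y'')$ with $\mu_\mathcal{E}(X)\ne\mu_\mathcal{E}(Y'')$, and $l_\mathcal{E}(Y')\le l_\mathcal{E}(X)$.
   Context: $(\mathcal{A},\mathcal{E})$ is a Quillen exact category; admissible monics are morphisms $i$ with $(i,d)\in\mathcal{E}$ for some $d$. $X\subset_\mathcal{E}Y$ means there is an admissible monic $X\to Y$; $X\subsetneq_\mathcal{E}Y$ means there is one that is not an isomorphism. The $\mathcal{E}$-length $l_\mathcal{E}(X)$ is the supremum of all $n$ such that there is a chain $0=X_0\to\cdots\to X_n=X$ of admissible monics none of which is an isomorphism; $(\mathcal{A},\mathcal{E})$ is finite if $l_\mathcal{E}(X)<\infty$ for all $X$. $\mathfrak{S}(\mathbb{N})$ is the set of finite nonempty sequences of natural numbers, totally ordered by: $x\lll y$ iff $x=y$, or $x$ is a proper prefix of $y$, or at the first index $i$ where $x_i\neq y_i$ (both defined) one has $x_i>y_i$. For indecomposable $X$, $\mu_\mathcal{E}(X)$ is the $\lll$-maximum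 of $(l_\mathcal{E}(X_1),\dots,l_\mathcal{E}(X_n))$ over all chains $X_1\subsetneq_\mathcal{E}\cdots\subsetneq_\mathcal{E}X_n=X$ ($n\ge1$) with all $X_i$ indecomposable. For indecomposables $X,Y$, $X$ is an $\mathcal{E}$-Gabriel–Roiter predecessor of $Y$ if $X\subsetneq_\mathcal{E}Y$ and $\mu_\mathcal{E}(X)=\max\{\mu_\mathcal{E}(Y') : Y'\text{ indecomposable},\ Y'\subsetneq_\mathcal{E}Y\}$. *)

From HB Require Import structures.
From mathcomp Require Import all_boot all_order all_algebra.
From Stdlib Require Import ClassicalEpsilon.
Set Implicit Arguments. Unset Strict Implicit. Unset Printing Implicit Defensive.
Import GRing.Theory.

Record preadditive := PreAdditive {
  obj :> Type;
  hom : obj -> obj -> zmodType;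
  idm : forall A, hom A A;
  comp : forall A B C, hom B C -> hom A B -> hom A C;
  compA : forall A B C D (h : hom C D) (g : hom B C) (f : hom A B),
      comp h (comp g f) = comp (comp h g) f;
  comp1m : forall A B (f : hom A B), comp (idm B) f = f;
  compm1 : forall A B (f : hom A B), comp f (idm A) = f;
  compDl : forall A B C (g1 g2 : hom B C) (f : hom A B),
      comp (g1 + g2)%R f = (comp g1 f + comp g2 f)%R;
  compDr : forall A B C (g : hom B C) (f1 f2 : hom A B),
      comp g (f1 + f2)%R = (comp g f1 + comp g f2)%R
}.
Arguments hom {p}.
Arguments idm {p}.
Arguments comp {p A B C}.

Section Basic.
Variable C : preadditive.

Definition is_zero (Z : C) : Prop :=
  forall Y : C, (forall f : hom Z Y, f = 0%R) /\ (forall g : hom Y Z, g = 0%R).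

Definition is_biproduct (X A B : C) : Prop :=
  exists (i1 : hom A X) (i2 : hom B X) (p1 : hom X A) (p2 : hom X B),
    [/\ comp p1 i1 = idm A, comp p2 i2 = idm B, comp p1 i2 = 0%R,
        comp p2 i1 = 0%R & (comp i1 p1 + comp i2 p2)%R = idm X].

Definition is_additive : Prop :=
  (exists Z : C, is_zero Z) /\ (forall A B : C, exists X : C, is_biproduct X A B).

Definition indecomposable (X : C) : Prop :=
  ~ is_zero X /\ forall A B : C, is_biproduct X A B -> is_zero A \/ is_zero B.

Definition is_iso (A B : C) (f : hom A B) : Prop :=
  exists g : hom B A, comp g f = idm A /\ comp f g = idm B.

Definition is_kernel (A B D : C) (i : hom A B) (d : hom B D) : Prop :=
  comp d i = 0%R /\
  forall (W : C) (f : hom W B), comp d f = 0%R -> exists! g : hom W A, comp i g = f.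

Definition is_cokernel (A B D : C) (i : hom A B) (d : hom B D) : Prop :=
  comp d i = 0%R /\
  forall (W : C) (f : hom B W), comp f i = 0%R -> exists! g : hom D W, comp g d = f.

Definition kc_pair (A B D : C) (i : hom A B) (d : hom B D) : Prop :=
  is_kernel i d /\ is_cokernel i d.

Definition is_pushout (A B A' B' : C) (i : hom A B) (f : hom A A')
    (i' : hom A' B') (f' : hom B B') : Prop :=
  comp i' f = comp f' i /\
  forall (W : C) (u : hom A' W) (v : hom B W), comp u f = comp v i ->
    exists! h : hom B' W, comp h i' = u /\ comp h f' = v.

Definition is_pullback (B D D' B' : C) (d : hom B D) (f : hom D' D)
    (d' : hom B' D') (f' : hom B' B) : Prop :=
  comp d f' = comp f d' /\
  forall (W : C) (u : hom W D') (v : hom W B), comp f u = comp d v ->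
    exists! h : hom W B', comp d' h = u /\ comp f' h = v.

Definition conflation_class := forall A B D : C, hom A B -> hom B D -> Prop.

Definition adm_monic (E : conflation_class) (A B : C) (i : hom A B) : Prop :=
  exists (D : C) (d : hom B D), E A B D i d.
Definition adm_epic (E : conflation_class) (B D : C) (d : hom B D) : Prop :=
  exists (A : C) (i : hom A B), E A B D i d.

(* Quillen's axioms, in the form of Buehler, "Exact categories", Def. 2.1 *)
Definition is_exact_structure (E : conflation_class) : Prop :=
  (forall A B D A' B' D' (i : hom A B) (d : hom B D) (i' : hom A' B') (d' : hom B' D')
          (a : hom A A') (b : hom B B') (c : hom D D'),
      E A B D i d -> is_iso a -> is_iso b -> is_iso c ->
      comp i' a = comp b i -> comp d' b = comp c d -> E A' B' D' i' d') /\
  (forall A B D (i : hom A B) (d : hom B D), E A B D i d -> kc_pair i d) /\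
  (forall A : C, adm_monic E (idm A)) /\ (forall A : C, adm_epic E (idm A)) /\
  (forall A B D (f : hom A B) (g : hom B D),
      adm_monic E f -> adm_monic E g -> adm_monic E (comp g f)) /\
  (forall A B D (f : hom A B) (g : hom B D),
      adm_epic E f -> adm_epic E g -> adm_epic E (comp g f)) /\
  (forall A B A' (i : hom A B) (f : hom A A'), adm_monic E i ->
      exists (B' : C) (i' : hom A' B') (f' : hom B B'),
        is_pushout i f i' f' /\ adm_monic E i') /\
  (forall B D D' (d : hom B D) (f : hom D' D), adm_epic E d ->
      exists (B' : C) (d' : hom B' D') (f' : hom B' B),
        is_pullback d f d' f' /\ adm_epic E d').

End Basic.

Record exact_category := ExactCategory {
  ecat :> preadditive;
  conflation : conflation_class ecat;
  ecat_additive : is_additive ecat;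
  ecat_exact : is_exact_structure conflation
}.

Section ExactNotions.
Variable EC : exact_category.

Definition subE (X Y : EC) : Prop :=
  exists i : hom X Y, adm_monic (@conflation EC) i.
Definition psubE (X Y : EC) : Prop :=
  exists i : hom X Y, adm_monic (@conflation EC) i /\ ~ is_iso i.

Inductive zchain : nat -> EC -> Prop :=
  | zchain0 (X : EC) : is_zero X -> zchain 0 X
  | zchainS (n : nat) (X' X : EC) : zchain n X' -> psubE X' X -> zchain n.+1 X.

Definition finite_exact : Prop :=
  forall X : EC, exists N : nat, forall n, zchain n X -> (n <= N)%N.

(* the E-length (the supremum, which is a maximum when finite) *)
Definition lE (X : EC) : nat :=
  epsilon (inhabits 0%N)
    (fun n => zchain n X /\ forall m, zchain m X -> (m <= n)%N).

Definition lll (x y : seq nat) : Prop :=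
  x = y \/ (prefix x y /\ x <> y) \/
  exists i : nat, [/\ (i < size x)%N, (i < size y)%N, take i x = take i y &
                      (nth 0%N y i < nth 0%N x i)%N].

Inductive grchain : seq nat -> EC -> Prop :=
  | grchain1 (X : EC) : indecomposable X -> grchain [:: lE X] X
  | grchainS (s : seq nat) (X' X : EC) :
      grchain s X' -> indecomposable X -> psubE X' X -> grchain (rcons s (lE X)) X.

Definition muE (X : EC) : seq nat :=
  epsilon (inhabits [::])
    (fun s => grchain s X /\ forall t, grchain t X -> lll t s).

Definition GR_predecessor (X Y : EC) : Prop :=
  psubE X Y /\
  forall Y' : EC, indecomposable Y' -> psubE Y' Y -> lll (muE Y') (muE X).

End ExactNotions.

(* Induct along a chain X_1 ⊊ ... ⊊ X_n = Y of indecomposables realising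
   mu(Y). Its <<<-maximality forces mu(X_(n-1)) = (l(X_1), ..., l(X_(n-1))) and
   makes X_(n-1) a Gabriel-Roiter predecessor of X_n. If mu(X) <<< mu(X_(n-1))
   strictly, recurse into X_(n-1) ⊂ Y. Otherwise
   mu(X_(n-1)) <<< mu(X) <<< mu(X_(n-1)) ++ [l(X_n)], which forces mu(X_(n-1))
   to be a prefix of the increasing sequence mu(X), hence l(X_(n-1)) <= l(X),
   and (Y', Y'') = (X_(n-1), X_n) works. The recursion cannot reach n = 1:
   mu(X) starts with a term at most 1, so mu(X) <<< (l(X_1)) forces equality. *)

From HB Require Import structures.
From mathcomp Require Import all_boot all_order ssralg.
From Stdlib Require Import Classical ClassicalEpsilon.
Set Implicit Arguments. Unset Strict Implicit. Unset Printing Implicit Defensive.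
Import Order.TTheory GRing.Theory.

Lemma ex_max_nat (P : nat -> Prop) N : (exists n, P n) ->
  (forall n, P n -> n <= N) -> exists n, P n /\ forall m, P m -> m <= n.
Proof.
elim: N => [|N IH] [n Pn] leN.
  by exists n; split=> // m /leN; rewrite leqn0 => /eqP ->.
have [PN|nPN] := classic (P N.+1); first by exists N.+1.
apply: IH; first by exists n.
move=> m Pm; move: (leN m Pm); rewrite leq_eqVlt => /orP[/eqP Em|//].
by rewrite Em in Pm.
Qed.

Lemma ex_max_in_seq d (T : orderType d) (P : T -> Prop) (l : seq T) :
  (forall x, P x -> x \in l) -> (exists x, P x) ->
  exists m, P m /\ forall x, P x -> (x <= m)%O.
Proof.
elim: l P => [|a l IH] P Pl [x Px]; first by have := Pl x Px.
have [[y [Py ya]]|only_a] := classic (exists y, P y /\ y != a); last first.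
  have eq_a z : P z -> z = a.
    by move=> Pz; apply/eqP/negP => za; apply: only_a; exists z; split=> //; apply/negP.
  by exists a; rewrite -{1}(eq_a x Px); split=> // z /eq_a ->.
have Pl' z : P z /\ z != a -> z \in l.
  by case=> Pz za; move: (Pl z Pz); rewrite inE (negbTE za).
have [m [[Pm _] maxm]] := IH _ Pl' (ex_intro _ y (conj Py ya)).
have maxm' z : P z -> z != a -> (z <= m)%O by move=> Pz za; apply: maxm.
have [Pa|nPa] := classic (P a); last first.
  exists m; split=> // z Pz; apply: maxm' => //.
  by apply/eqP => za; rewrite -za in nPa.
case: (leP a m) => [am|ma]; [exists m|exists a]; split=> // z Pz;
  have [->|za] := eqVneq z a; rewrite ?lexx //; [exact: maxm'|].
exact: le_trans (maxm' z Pz za) (ltW ma).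
Qed.

Lemma sorted_subseq_iota n t :
  sorted ltn t -> all (fun x => x < n) t -> subseq t (iota 0 n).
Proof.
move=> st tn; apply/subseq_uniqP; first exact: iota_uniq.
apply: (irr_sorted_eq ltn_trans ltnn st (sorted_filter ltn_trans _ (iota_ltn_sorted 0 n))).
move=> x; rewrite mem_filter mem_iota add0n /=.
by case xt: (x \in t); rewrite //= (allP tn).
Qed.

Lemma subseq_iota_masks n t : subseq t (iota 0 n) ->
  t \in [seq mask m (iota 0 n) | m : n.-tuple bool].
Proof.
case/subseqP=> m szm ->; have szm' : size m == n by rewrite szm size_iota.
by apply/mapP; exists (Tuple szm'); rewrite ?mem_enum.
Qed.

Lemma last_prefix_sorted (s x : seq nat) : s <> [::] -> sorted leq x ->
  prefix s x -> last 0 s <= last 0 x.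
Proof.
case: s => [//|b s] _ sx /prefixP[r xE]; move: sx; rewrite xE /= last_cat cat_path => /andP[_].
move/(order_path_min leq_trans)/allP => le_r.
by have := mem_last (last b s) r; rewrite inE => /orP[/eqP ->|/le_r].
Qed.

(* [lll] is the lexicographic order on sequences over the dual of nat. *)
Local Notation grseq := (seqlexi nat^d).

Lemma lll_cons a x b y : lll (a :: x) (b :: y) <-> b < a \/ a = b /\ lll x y.
Proof.
split.
- case=> [[-> ->]|[[/= /andP[/eqP -> pre] ne]|[[|i] [/= lti_x lti_y take_xy lt_i]]]].
  + by right; split=> //; left.
  + by right; split=> //; right; left; split=> // eq_xy; apply: ne; rewrite eq_xy.
  + by left.
  + by case: take_xy => -> take_xy; right; split=> //; right; right; exists i.
- case=> [lt_ba|[-> [->|[[pre ne]|[i [lti_x lti_y take_xy lt_i]]]]]].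
  + by right; right; exists 0.
  + by left.
  + right; left; split; first by rewrite /= eqxx pre.
    by case=> eq_xy; apply: ne.
  + by right; right; exists i.+1; split=> //=; rewrite take_xy.
Qed.

Lemma lexi_grcons a x b y :
  (a :: x <= b :: y :> grseq)%O = (b < a) || (a == b) && (x <= y :> grseq)%O.
Proof. by rewrite lexi_cons !leEdual !leEnat; case: ltngtP. Qed.

Lemma lllP x y : reflect (lll x y) (x <= y :> grseq)%O.
Proof.
elim: x y => [|a x IH] [|b y].
- by rewrite lexx; constructor; left.
- by rewrite lexi0s; constructor; right; left.
- by rewrite lexis0; constructor; case=> [//|[[]//|[i []]]].
- rewrite lexi_grcons; apply: (iffP idP).
  + by case/orP=> [lt_ba|/andP[/eqP -> /IH lxy]]; apply/lll_cons; [left|right].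
  + by case/lll_cons=> [->//|[-> /IH ->]]; rewrite eqxx orbT.
Qed.

Lemma lexi_rcons2K t s l : all (fun a => a < l) t ->
  (rcons t l <= rcons s l :> grseq)%O -> (t <= s :> grseq)%O.
Proof.
elim: t s => [|a t IH] [|b s] //= /andP[al tl]; rewrite !lexi_grcons.
- by rewrite ltnNge (ltnW al) (ltn_eqF al).
- by case/orP=> [->//|/andP[-> /(IH _ tl) ->]]; rewrite orbT.
Qed.

Lemma lexi_rcons_prefix s x l : (s <= x :> grseq)%O ->
  (x <= rcons s l :> grseq)%O -> prefix s x.
Proof.
elim: s x => [|b s IH] [|a x] //=; rewrite !lexi_grcons.
case/orP=> [lt_ab|/andP[/eqP eq_ba le_sx]]; case/orP=> [lt_ba|/andP[/eqP eq_ab le_xs]].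
- by move: (ltn_trans lt_ab lt_ba); rewrite ltnn.
- by move: lt_ab; rewrite eq_ab ltnn.
- by move: lt_ba; rewrite eq_ba ltnn.
- by rewrite eq_ba eqxx (IH _ le_sx le_xs).
Qed.

Section Preadditive.
Variable C : preadditive.
Local Open Scope ring_scope.

Lemma comp0r (A B D : C) (g : hom B D) : comp g (0 : hom A B) = 0.
Proof.
have H := compDr g (0 : hom A B) 0; rewrite addr0 in H.
by move/(congr1 (fun x => x - comp g 0)): H; rewrite addrK subrr.
Qed.

Lemma comp0l (A B D : C) (f : hom A B) : comp (0 : hom B D) f = 0.
Proof.
have H := compDl (0 : hom B D) 0 f; rewrite addr0 in H.
by move/(congr1 (fun x => x - comp 0 f)): H; rewrite addrK subrr.
Qed.

Lemma idm_zero (Z : C) : idm Z = 0 -> is_zero Z.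
Proof.
move=> Z0 Y; split=> f; first by rewrite -(compm1 f) Z0 comp0r.
by rewrite -(comp1m f) Z0 comp0l.
Qed.

Lemma zero_iso (A B : C) (f : hom A B) : is_zero A -> is_zero B -> is_iso f.
Proof.
move=> zA zB; exists 0; split.
  by rewrite ((zA A).1 (comp _ _)) ((zA A).1 (idm A)).
by rewrite ((zB B).1 (comp _ _)) ((zB B).1 (idm B)).
Qed.

Lemma kernel_monic (A B D : C) (i : hom A B) (d : hom B D) : is_kernel i d ->
  forall W (g1 g2 : hom W A), comp i g1 = comp i g2 -> g1 = g2.
Proof.
move=> [di0 univ] W g1 g2 eq_ig.
have dig1 : comp d (comp i g1) = 0 by rewrite compA di0 comp0l.
have [g [_ uniq_g]] := univ W _ dig1.
by rewrite -(uniq_g g1) // (uniq_g g2).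
Qed.

Lemma monic_iso_comp (A B D : C) (f : hom A B) (g : hom B D) :
  (forall W (g1 g2 : hom W B), comp g g1 = comp g g2 -> g1 = g2) ->
  is_iso (comp g f) -> is_iso g.
Proof.
move=> g_monic [h [hgf gfh]]; exists (comp f h); split; last by rewrite compA.
by apply: g_monic; rewrite compm1 compA (compA g f h) gfh comp1m.
Qed.

End Preadditive.

Section ExactCategory.
Variable EC : exact_category.
Local Notation adm := (adm_monic (@conflation EC)).

Lemma conflation_kc_pair (A B D : EC) (i : hom A B) (d : hom B D) :
  conflation i d -> kc_pair i d.
Proof. exact: (ecat_exact EC).2.1. Qed.

Lemma adm_monic_idm (A : EC) : adm (idm A).
Proof. exact: (ecat_exact EC).2.2.1. Qed.

Lemma adm_monic_comp (A B D : EC) (f : hom A B) (g : hom B D) :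
  adm f -> adm g -> adm (comp g f).
Proof. exact: (ecat_exact EC).2.2.2.2.1. Qed.

Lemma adm_monic_cancel (A B : EC) (f : hom A B) : adm f ->
  forall W (g1 g2 : hom W A), comp f g1 = comp f g2 -> g1 = g2.
Proof. by case=> D [d /conflation_kc_pair[/kernel_monic]]. Qed.

(* The kernel of the admissible epic [idm X] is a zero object. *)
Lemma zero_adm_monic (X : EC) :
  exists (K : EC) (k : hom K X), is_zero K /\ adm k.
Proof.
have [K [k kX]] := (ecat_exact EC).2.2.2.1 X.
have [[k0 univ] _] := conflation_kc_pair kX.
have [g [_ uniq_g]] := univ K k k0; rewrite comp1m in k0.
have Kz : is_zero K.
  by apply: idm_zero; rewrite -(uniq_g (idm K)) ?compm1 // (uniq_g 0%R) // comp0r k0.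
by exists K, k; split=> //; exists X, (idm X).
Qed.

Lemma zero_psubE (X : EC) : ~ is_zero X -> exists K : EC, is_zero K /\ psubE K X.
Proof.
move=> nX; have [K [k [Kz k_adm]]] := zero_adm_monic X.
exists K; split=> //; exists k; split=> // [[g [_ kg]]].
by apply: nX; apply: idm_zero; rewrite -kg ((Kz X).1 k) comp0l.
Qed.

Lemma psubE_comp (S W Z : EC) (f : hom S W) (g : hom W Z) :
  adm f -> adm g -> ~ is_iso g -> psubE S Z.
Proof.
move=> f_adm g_adm g_niso; exists (comp g f); split; first exact: adm_monic_comp.
by move=> gf_iso; apply: g_niso; apply: monic_iso_comp (adm_monic_cancel g_adm) gf_iso.
Qed.

(* Push out the admissible monic from a zero object into [B] along the zero map into [A]. *)
Lemma biproduct_inl_adm (W A B : EC) (i1 : hom A W) (i2 : hom B W)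
    (p1 : hom W A) (p2 : hom W B) :
  comp p1 i1 = idm A -> comp p2 i2 = idm B -> comp p1 i2 = 0%R ->
  comp p2 i1 = 0%R -> (comp i1 p1 + comp i2 p2)%R = idm W -> adm i1.
Proof.
move=> p1i1 p2i2 p1i2 p2i1 sumW.
have [K [k [Kz k_adm]]] := zero_adm_monic B.
have [B' [i' [f' [[sq univ] [D [d i'd]]]]]] :=
  (ecat_exact EC).2.2.2.2.2.2.1 _ _ _ k (0%R : hom K A) k_adm.
have [h [[hi' hf'] _]] := univ W i1 i2 (etrans ((Kz W).1 _) (esym ((Kz W).1 _))).
pose g := (comp i' p1 + comp f' p2)%R.
have gh : comp g h = idm B'.
  have [u [_ uniq_u]] := univ B' i' f' sq.
  rewrite -(uniq_u (idm B')) ?comp1m //; apply/esym/uniq_u; split.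
    by rewrite -compA hi' /g compDl -!compA p2i1 p1i1 comp0r compm1 addr0.
  by rewrite -compA hf' /g compDl -!compA p1i2 p2i2 comp0r compm1 add0r.
have hg : comp h g = idm W by rewrite /g compDr !compA hi' hf'.
exists D, (comp d g).
apply: ((ecat_exact EC).1 _ _ _ _ _ _ _ _ _ _ (idm A) h (idm D) i'd).
- by exists (idm A); rewrite comp1m.
- by exists g.
- by exists (idm D); rewrite comp1m.
- by rewrite compm1 hi'.
- by rewrite -compA gh compm1 comp1m.
Qed.

Lemma decomposable_psubE (W : EC) : ~ is_zero W -> ~ indecomposable W ->
  exists A : EC, ~ is_zero A /\ psubE A W.
Proof.
move=> nW Wdec.
have [A [B [[i1 [i2 [p1 [p2 [p1i1 p2i2 p1i2 p2i1 sumW]]]]] nA nB]]] :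
    exists A B : EC, [/\ is_biproduct W A B, ~ is_zero A & ~ is_zero B].
  apply: NNPP => nodec; apply: Wdec; split=> // A B bpW.
  by apply: NNPP => nAB; apply: nodec; exists A, B; split=> // ?; apply: nAB; [left|right].
exists A; split=> //; exists i1; split; first exact: biproduct_inl_adm sumW.
case=> q [_ i1q]; apply: nB; apply: idm_zero.
have p20 : p2 = 0%R by rewrite -(compm1 p2) -i1q compA p2i1 comp0l.
by rewrite -p2i2 p20 comp0l.
Qed.

Lemma zchainSP n (X : EC) : zchain n.+1 X -> exists X' : EC, zchain n X' /\ psubE X' X.
Proof. by move=> ch; inversion ch; exists X'. Qed.

Lemma zchainS_nonzero n (X : EC) : zchain n.+1 X -> ~ is_zero X.
Proof.
case/zchainSP=> X' [_ [i [i_adm i_niso]]] Xz; apply: i_niso.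
have X'z : is_zero X'.
  apply: idm_zero; apply: (adm_monic_cancel i_adm).
  by rewrite ((Xz X').2 (comp i _)) ((Xz X').2 (comp i 0%R)).
exact: zero_iso.
Qed.

Variable Hfin : finite_exact EC.

Lemma lE_spec (X : EC) : zchain (lE X) X /\ forall m, zchain m X -> lE X >= m.
Proof.
have [N leN] := Hfin X.
have ch_X : exists n, zchain n X.
  have [Xz|nX] := classic (is_zero X); first by exists 0; constructor.
  by have [K [Kz KX]] := zero_psubE nX; exists 1; apply: zchainS (zchain0 Kz) KX.
exact: (epsilon_spec (inhabits 0) _ (ex_max_nat ch_X leN)).
Qed.

Lemma lE_psubE (A B : EC) : psubE A B -> lE A < lE B.
Proof. by move=> AB; apply: (lE_spec B).2; apply: zchainS (lE_spec A).1 AB. Qed.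

Lemma lE_gt0 (X : EC) : ~ is_zero X -> 0 < lE X.
Proof.
move=> nX; have [K [Kz KX]] := zero_psubE nX.
by apply: (lE_spec X).2; apply: zchainS (zchain0 Kz) KX.
Qed.

Lemma indecomposable_adm_sub (W : EC) : ~ is_zero W ->
  exists (S : EC) (f : hom S W), indecomposable S /\ adm f.
Proof.
have [n] := ubnP (lE W); elim: n W => // n IH W /ltnSE le_Wn nW.
have [Wi|Wdec] := classic (indecomposable W).
  by exists W, (idm W); split=> //; apply: adm_monic_idm.
have [A [nA AW]] := decomposable_psubE nW Wdec.
have [S [f [Si f_adm]]] := IH A (leq_trans (lE_psubE AW) le_Wn) nA.
case: AW => i [i_adm _]; exists S, (comp i f); split=> //; exact: adm_monic_comp.
Qed.

Lemma indecomposable_psubE (Z : EC) : 1 < lE Z ->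
  exists S : EC, indecomposable S /\ psubE S Z.
Proof.
move: (lE_spec Z).1; case: (lE Z) => [|[|n]] // /zchainSP[X' [chX' [g [g_adm g_niso]]]] _.
have [S [f [Si f_adm]]] := indecomposable_adm_sub (zchainS_nonzero chX').
by exists S; split=> //; apply: psubE_comp f_adm g_adm g_niso.
Qed.

Lemma grchain_shape s (X : EC) : grchain s X ->
  [/\ s <> [::], last 0 s = lE X, sorted ltn s,
      all (fun x => x <= lE X) s & indecomposable X].
Proof.
elim=> [Y Yi|{}s X' Y _ [nes ls ss les _] Yi X'Y] /=; first by rewrite leqnn.
have lt_X'Y := lE_psubE X'Y.
split=> //; first by case: (s).
- by rewrite last_rcons.
- by case: s nes ls ss les => [//|a s] _ /= ls ss _; rewrite rcons_path ss ls.
- rewrite all_rcons leqnn; apply/allP=> y /(allP les) le_y.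
  exact: leq_trans le_y (ltnW lt_X'Y).
Qed.

Lemma grchain_prepend s (Z : EC) : grchain s Z -> exists W : EC,
  [/\ indecomposable W, head 0 s = lE W &
      forall S, indecomposable S -> psubE S W -> grchain (lE S :: s) Z].
Proof.
elim=> [Y Yi|{}s X' Y chs [W [Wi hs ext]] Yi X'Y].
  by exists Y; split=> // S Si SY; apply: grchainS (grchain1 Si) Yi SY.
exists W; split=> //; first by case: s chs hs ext => // /grchain_shape[].
by move=> S Si SW; apply: grchainS (ext S Si SW) Yi X'Y.
Qed.

Lemma muE_spec (X : EC) : indecomposable X ->
  grchain (muE X) X /\ forall t, grchain t X -> lll t (muE X).
Proof.
move=> Xi; apply: (epsilon_spec (inhabits [::])
  (fun s => grchain s X /\ forall t, grchain t X -> lll t s)).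
have in_masks t : grchain t X ->
    t \in [seq mask b (iota 0 (lE X).+1) | b : (lE X).+1.-tuple bool].
  by case/grchain_shape=> _ _ st lt _; apply/subseq_iota_masks/sorted_subseq_iota.
have [m [chm maxm]] := @ex_max_in_seq _ grseq (fun t => grchain t X) _
  in_masks (ex_intro _ _ (grchain1 Xi)).
by exists m; split=> // t /maxm /lllP.
Qed.

Lemma muE_max s (Y : EC) : grchain s Y -> (forall t, grchain t Y -> lll t s) ->
  muE Y = s.
Proof.
move=> chs maxs; have [_ _ _ _ /muE_spec[chY maxY]] := grchain_shape chs.
by apply: (@le_anti _ grseq); apply/andP; split; apply/lllP;
  [apply: maxs|apply: maxY].
Qed.

(* Prepending a proper indecomposable subobject of the first term of a chain
   yields a <<<-larger sequence. *)
Lemma muE_head_le1 (X : EC) : indecomposable X -> head 0 (muE X) <= 1.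
Proof.
move=> Xi; have [chX maxX] := muE_spec Xi.
have [W [_ hX ext]] := grchain_prepend chX.
rewrite hX leqNgt; apply/negP => /indecomposable_psubE[S [Si SW]].
have /lllP := maxX _ (ext S Si SW).
have [neX _ _ _ _] := grchain_shape chX.
move: hX; case: (muE X) neX => [//|a x] _ /= ->.
by rewrite lexi_grcons ltnNge (ltnW (lE_psubE SW)) (ltn_eqF (lE_psubE SW)).
Qed.

Lemma muE_le_singleton (X Y : EC) : indecomposable X -> indecomposable Y ->
  (muE X <= [:: lE Y] :> grseq)%O -> muE X = [:: lE Y].
Proof.
move=> Xi Yi; have := muE_head_le1 Xi.
have [/grchain_shape[neX _ _ _ _] _] := muE_spec Xi.
case: (muE X) neX => [//|a x] _ /= le_a1; rewrite lexi_grcons lexis0.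
case/orP=> [lt_Ya|/andP[/eqP -> /eqP ->]] //.
by move: (leq_trans lt_Ya le_a1); rewrite ltnS leqNgt lE_gt0 //; case: Yi.
Qed.

Lemma grchain_rcons_lllK t s (Z Y : EC) : grchain t Z -> psubE Z Y ->
  lll (rcons t (lE Y)) (rcons s (lE Y)) -> lll t s.
Proof.
move=> cht ZY /lllP le_ts; apply/lllP; apply: lexi_rcons2K le_ts.
have [_ _ _ le_t _] := grchain_shape cht.
by apply/allP=> y /(allP le_t) /leq_ltn_trans; apply; apply: lE_psubE.
Qed.

Lemma muE_GR_step s (Z Y : EC) : grchain s Z -> indecomposable Y -> psubE Z Y ->
  (forall t, grchain t Y -> lll t (rcons s (lE Y))) ->
  [/\ muE Z = s, muE Y = rcons s (lE Y) & GR_predecessor Z Y].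
Proof.
move=> chs Yi ZY maxs.
have below t (Z' : EC) : grchain t Z' -> psubE Z' Y -> lll t s.
  by move=> cht Z'Y; apply: grchain_rcons_lllK cht Z'Y (maxs _ (grchainS cht Yi Z'Y)).
have muZ : muE Z = s by apply: muE_max chs _ => t cht; apply: below cht ZY.
split=> //; first exact: muE_max (grchainS chs Yi ZY) maxs.
by split=> // Y' Y'i Y'Y; rewrite muZ; apply: below (muE_spec Y'i).1 Y'Y.
Qed.

Lemma exists_GR_pair_below s (Y : EC) : grchain s Y ->
  (forall t, grchain t Y -> lll t s) ->
  forall X : EC, indecomposable X -> (muE X < s :> grseq)%O ->
  exists Y' Y'' : EC,
    [/\ indecomposable Y', indecomposable Y'', psubE Y' Y'', subE Y'' Y &
     [/\ GR_predecessor Y' Y'', lll (muE Y') (muE X),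
         lll (muE X) (muE Y''), muE X <> muE Y'' & lE Y' <= lE X]].
Proof.
elim=> {s Y} [Y Yi|s Z Y chs IH Yi ZY] maxs X Xi lt_Xs.
  by move: lt_Xs; rewrite lt_neqAle => /andP[/eqP neXY /(muE_le_singleton Xi Yi)/neXY].
have [nes ls _ _ Zi] := grchain_shape chs.
have [muZ muY GR] := muE_GR_step chs Yi ZY maxs.
have maxZ t : grchain t Z -> lll t s by rewrite -muZ; apply: (muE_spec Zi).2.
case: (@ltP _ grseq (muE X) s) => [lt_Xs'|le_sX].
  have [Y' [Y'' [Y'i Y''i Y'Y'' [f f_adm] rest]]] := IH maxZ X Xi lt_Xs'.
  case: ZY => g [g_adm _]; exists Y', Y''; split=> //.
  by exists (comp g f); apply: adm_monic_comp.
exists Z, Y; split=> //; first by exists (idm Y); apply: adm_monic_idm.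
rewrite muY; split=> //.
- by rewrite muZ; apply/lllP.
- by apply/lllP/ltW.
- by move=> eq_Xs; rewrite eq_Xs ltxx in lt_Xs.
- have [/grchain_shape[neX lX sX _ _] _] := muE_spec Xi.
  rewrite -lX -ls; apply: last_prefix_sorted nes (sub_sorted (@ltnW) sX) _.
  exact: lexi_rcons_prefix le_sX (ltW lt_Xs).
Qed.

End ExactCategory.

Theorem proposition7p12 (EC : exact_category) (Hfin : finite_exact EC) (X Y : EC) :
  indecomposable X -> indecomposable Y ->
  lll (muE X) (muE Y) -> muE X <> muE Y ->
  exists Y' Y'' : EC,
    [/\ indecomposable Y', indecomposable Y'', psubE Y' Y'', subE Y'' Y &
     [/\ GR_predecessor Y' Y'', lll (muE Y') (muE X),
         lll (muE X) (muE Y''), muE X <> muE Y'' & (lE Y' <= lE X)%N]].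
Proof.
move=> Xi Yi /lllP le_XY neXY; have [chY maxY] := muE_spec Hfin Yi.
have lt_XY : (muE X < muE Y :> grseq)%O.
  by rewrite lt_neqAle le_XY andbT; apply/eqP.
exact: (exists_GR_pair_below Hfin chY maxY Xi lt_XY).
Qed.
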